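(* Let $\epsilon\in(0,1/2]$, $d\ge1$, and let $f$ be the binary-tree function of depth $d$ on $n=2^{d+1}-2$ variables, with unit costs and $p_i=\frac{1+\epsilon}{2}$ for all $i$. Let $q=\left(\frac{1+\epsilon}{2}\right)^d$ and suppose $q\le\epsilon$. Then $$\mathsf{OPT}_{\mathcal N}(f,c,p)\ge \frac{\epsilon^2}{8q}.$$
   Context: Stochastic Boolean Function Evaluation setup: the input $x\in\{0,1\}^n$ has independent coordinates with $\Pr(x_i=1)=p_i$; testing $x_i$ costs $c_i$ (here $c_i=1$). A non-adaptive strategy is a fixed permutation of $[n]$; variables are tested in that order until $f(x)$ is determined (i.e. $f(x')=f(x)$ for all $x'$ agreeing with $x$ on tested coordinates). $\mathsf{OPT}_{\mathcal N}(f,c,p)$ is the minimum expected total test cost over non-adaptive strategies. Binary-tree function of depth $d$: in the complete binary tree of depth $d$ (root at depth $0$, $2^d$ leaves), the $n=2^{d+1}-2$ edges are numbered $1,\dots,n$ and variable $x_i$ is associated with edge $i$; a leaf is alive if $x_i=1$ for every edge on its root-to-leaf path, and $f(x)=1$ iff some leaf is alive. *)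

From HB Require Import structures.
From mathcomp Require Import all_boot all_order fingroup perm all_algebra.
Set Implicit Arguments. Unset Strict Implicit. Unset Printing Implicit Defensive.
Import Order.TTheory GRing.Theory Num.Theory.
Local Open Scope ring_scope.

Section SBFE.
Variables (R : realFieldType) (n : nat).
Implicit Types (x y : {ffun 'I_n -> bool}) (s : {perm 'I_n}).

Definition determined (f : {ffun 'I_n -> bool} -> bool) (T : {set 'I_n}) x : bool :=
  [forall y : {ffun 'I_n -> bool}, [forall i in T, y i == x i] ==> (f y == f x)].

Definition tested s (k : nat) : {set 'I_n} := [set s i | i : 'I_n & (i < k)%N].

(* number of tests performed: the least k such that the first k tests
   determine f(x) (k = n always works) *)
Definition stop_time f s x : nat :=
  find (fun k => determined f (tested s k) x) (iota 0 n.+1).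

Definition prob (p : 'I_n -> R) x : R :=
  \prod_(i : 'I_n) (if x i then p i else 1 - p i).

Definition run_cost f (c : 'I_n -> R) s x : R :=
  \sum_(i : 'I_n | (i < stop_time f s x)%N) c (s i).

Definition expected_cost f (c p : 'I_n -> R) s : R :=
  \sum_x prob p x * run_cost f c s x.

(* OPT_N(f,c,p): minimum expected cost over all non-adaptive strategies *)
Definition OPT_N f (c p : 'I_n -> R) : R :=
  \big[Num.min/expected_cost f c p 1]_(s : {perm 'I_n}) expected_cost f c p s.
End SBFE.

(* Nodes of the complete binary tree of depth d are numbered in heap order
   1 .. 2^(d+1)-1 (root 1, children of v are 2v and 2v+1); the edge entering
   node v >= 2 is variable number v-2, so edges are 0 .. 2^(d+1)-3. *)
Definition tree_n (d : nat) : nat := (2 ^ d.+1 - 2)%N.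

Definition xat (n : nat) (x : {ffun 'I_n -> bool}) (i : nat) : bool :=
  if insub i is Some j then x j else true.

(* leaf l (node 2^d + l) is alive iff the edges into its ancestors
   (2^d+l) / 2^k, k = 0..d-1, all have value 1 *)
Definition tree_f (d : nat) (x : {ffun 'I_(tree_n d) -> bool}) : bool :=
  [exists l : 'I_(2 ^ d), [forall k : 'I_d, xat x (((2 ^ d + l) %/ 2 ^ k) - 2)%N]].

From HB Require Import structures.
From mathcomp Require Import all_boot all_order fingroup perm all_algebra.
From mathcomp Require Import zify ring lra.
Set Implicit Arguments. Unset Strict Implicit. Unset Printing Implicit Defensive.
Import Order.TTheory GRing.Theory Num.Theory.

(* Let p = (1 + eps)/2 and q = p^d.  The number Z of alive leaves has mean
   (2p)^d = (1 + eps)^d, and two leaves whose root paths merge at height j are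
   both alive with probability q p^j; since at most 2^j leaves merge with a
   given one below height j, E[Z^2] <= G E[Z] with eps G <= (1 + eps)^d, and
   the second moment method gives Pr(f = 1) >= eps.  After k tests at most k
   leaves have their whole root path tested (their bottom edges are distinct),
   so f is still undetermined after k tests with probability at least
   eps - k q.  Summing these tail probabilities over k < K ~ eps/q bounds the
   expected number of tests of every order by eps^2 / (8 q). *)

Section Ancestors.
Variable d : nat.

Definition ancestor (l k : nat) : nat := (2 ^ d + l) %/ 2 ^ k.

Lemma ancestor_ge l k : k <= d -> 2 ^ (d - k) <= ancestor l k.
Proof.
move=> kd; rewrite /ancestor.
have -> : 2 ^ (d - k) = 2 ^ d %/ 2 ^ k.
  by rewrite -{2}(subnK kd) expnD mulnK // expn_gt0.
by apply: leq_div2r; rewrite leq_addr.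
Qed.

Lemma ancestor_lt l k : l < 2 ^ d -> k <= d -> ancestor l k < 2 ^ (d - k).+1.
Proof.
move=> ld kd; rewrite /ancestor ltn_divLR ?expn_gt0 // -expnD addSn subnK //.
by rewrite expnS mul2n -addnn ltn_add2l.
Qed.

Lemma ancestor_ge2 l k : k < d -> 2 <= ancestor l k.
Proof.
move=> kd; apply: leq_trans (ancestor_ge l (ltnW kd)).
by rewrite -{1}(expn1 2) leq_exp2l // subn_gt0.
Qed.

Lemma ancestor_height_inj l l' k k' : l < 2 ^ d -> l' < 2 ^ d -> k <= d -> k' <= d ->
  ancestor l k = ancestor l' k' -> k = k'.
Proof.
move=> ld ld' kd kd' E.
have lt1 : 2 ^ (d - k) < 2 ^ (d - k').+1.
  by apply: leq_ltn_trans (ancestor_ge l kd) _; rewrite E ancestor_lt.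
have lt2 : 2 ^ (d - k') < 2 ^ (d - k).+1.
  by apply: leq_ltn_trans (ancestor_ge l' kd') _; rewrite -E ancestor_lt.
rewrite ltn_exp2l // in lt1; rewrite ltn_exp2l // in lt2; lia.
Qed.

Lemma ancestorD l k i : ancestor l (k + i) = ancestor l k %/ 2 ^ i.
Proof. by rewrite /ancestor expnD divnMA. Qed.

Lemma ancestor0 l : ancestor l 0 = 2 ^ d + l.
Proof. by rewrite /ancestor expn0 divn1. Qed.

Lemma ancestor_root l : l < 2 ^ d -> ancestor l d = 1.
Proof.
move=> ld; have := ancestor_ge l (leqnn d); have := ancestor_lt ld (leqnn d).
rewrite subnn expn0 expn1; lia.
Qed.

Lemma expn_le_tree_n : 0 < d -> 2 ^ d <= tree_n d.
Proof.
move=> d_gt0; have : 2 <= 2 ^ d by rewrite -{1}(expn1 2) leq_exp2l.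
rewrite /tree_n expnS; lia.
Qed.

Lemma ancestor_edge_lt l k : l < 2 ^ d -> k < d -> ancestor l k - 2 < tree_n d.
Proof.
move=> ld kd; have := ancestor_lt ld (ltnW kd); have := ancestor_ge2 l kd.
have : 2 ^ (d - k).+1 <= 2 ^ d.+1 by rewrite leq_exp2l // ltnS leq_subr.
rewrite /tree_n; lia.
Qed.

Definition branch_height (v w : nat) : nat :=
  find (fun j => ancestor v j == ancestor w j) (iota 0 d.+1).

Section BranchHeight.
Variables v w : nat.
Hypotheses (vd : v < 2 ^ d) (wd : w < 2 ^ d).

Let has_branch : has (fun j => ancestor v j == ancestor w j) (iota 0 d.+1).
Proof.
apply/hasP; exists d; first by rewrite mem_iota add0n ltnS leqnn.
by rewrite !ancestor_root.
Qed.

Lemma branch_height_le : branch_height v w <= d.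
Proof. by move: has_branch; rewrite has_find size_iota ltnS. Qed.

Lemma ancestor_neq_branch k : k < branch_height v w -> ancestor v k != ancestor w k.
Proof.
move=> kb; have := before_find 0 kb.
rewrite nth_iota ?add0n => [->//|].
by rewrite ltnS (leq_trans (ltnW kb) branch_height_le).
Qed.

Lemma ancestor_eq_branch j : branch_height v w <= j -> j <= d ->
  ancestor v j = ancestor w j.
Proof.
move=> bj jd; have := nth_find 0 has_branch.
rewrite -/(branch_height v w) nth_iota ?add0n ?ltnS ?branch_height_le // => /eqP E.
by rewrite -(subnKC bj) !ancestorD E.
Qed.

End BranchHeight.

(* Leaves merging with v at height at most j share its residue modulo 2^j. *)
Lemma card_branch_height_le (v : 'I_(2 ^ d)) j : j <= d ->
  #|[set w : 'I_(2 ^ d) | branch_height v w <= j]| <= 2 ^ j.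
Proof.
move=> jd; have j0 : 0 < 2 ^ j by rewrite expn_gt0.
pose g (w : 'I_(2 ^ d)) : 'I_(2 ^ j) := Ordinal (ltn_pmod (2 ^ d + w) j0).
rewrite -(card_in_imset (f := g)); first by apply: leq_trans (max_card _) _; rewrite card_ord.
move=> w w'; rewrite !inE => bw bw' /(congr1 val) /= E.
have := ancestor_eq_branch (ltn_ord v) (ltn_ord w) bw jd.
have := ancestor_eq_branch (ltn_ord v) (ltn_ord w') bw' jd.
rewrite /ancestor => Ew' Ew; apply/val_inj/eqP; rewrite -(eqn_add2l (2 ^ d)).
by rewrite (divn_eq (2 ^ d + w) (2 ^ j)) (divn_eq (2 ^ d + w') (2 ^ j)) E -Ew -Ew'.
Qed.

End Ancestors.

Section LeafPaths.
Variable d : nat.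
Implicit Types (v w l : 'I_(2 ^ d)) (x : {ffun 'I_(tree_n d) -> bool}).

Definition path_edge l (k : 'I_d) : 'I_(tree_n d) :=
  Ordinal (ancestor_edge_lt (ltn_ord l) (ltn_ord k)).

Lemma path_edge_inj l l' (k k' : 'I_d) :
  path_edge l k = path_edge l' k' -> ancestor d l k = ancestor d l' k'.
Proof.
move/(congr1 val) => /=.
by have := ancestor_ge2 l (ltn_ord k); have := ancestor_ge2 l' (ltn_ord k'); lia.
Qed.

Definition leaf_path l : {set 'I_(tree_n d)} := [set path_edge l k | k : 'I_d].

Definition alive l x : bool := [forall j in leaf_path l, x j].

Lemma card_leaf_path l : #|leaf_path l| = d.
Proof.
rewrite card_imset ?card_ord // => k k' /path_edge_inj E; apply: val_inj.
by apply: (ancestor_height_inj (ltn_ord l) (ltn_ord l)) E; apply: ltnW.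
Qed.

Lemma xat_path_edge l (k : 'I_d) x : xat x (ancestor d l k - 2) = x (path_edge l k).
Proof.
rewrite /xat; case: insubP => [j _ Ej|]; last by rewrite ancestor_edge_lt.
by congr (x _); apply: val_inj.
Qed.

Lemma tree_fE x : tree_f x = [exists l, alive l x].
Proof.
apply: eq_existsb => l; apply/forallP/forall_inP => [H _ /imsetP[k _ ->]|H k].
  by rewrite -xat_path_edge; apply: H.
by rewrite xat_path_edge; apply/H/imset_f.
Qed.

(* The edges below height branch_height v w on the path of w avoid the path of v. *)
Lemma card_leaf_pathU v w : d + branch_height d v w <= #|leaf_path v :|: leaf_path w|.
Proof.
have bd := branch_height_le (ltn_ord v) (ltn_ord w).
pose low := [set path_edge w (widen_ord bd k) | k : 'I_(branch_height d v w)].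
have card_low : #|low| = branch_height d v w.
  rewrite card_imset ?card_ord // => k k' /path_edge_inj E; apply: val_inj.
  by apply: (ancestor_height_inj (ltn_ord w) (ltn_ord w)) E; rewrite ltnW // ltn_ord.
have disj : [disjoint leaf_path v & low].
  apply/pred0P => j /=; apply/negP => /andP[/imsetP[k _ ->] /imsetP[k' _ /path_edge_inj E]].
  have kk : val k = val k'.
    by apply: (ancestor_height_inj (ltn_ord v) (ltn_ord w)) E; rewrite ltnW ?ltn_ord.
  by have := ancestor_neq_branch (ltn_ord v) (ltn_ord w) (ltn_ord k'); rewrite -kk E kk eqxx.
have sub : leaf_path v :|: low \subset leaf_path v :|: leaf_path w.
  by apply/setUS/subsetP => _ /imsetP[k _ ->]; apply: imset_f.
apply: leq_trans (subset_leq_card sub).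
by rewrite (eqTleqif (leq_card_setU _ _) disj) card_leaf_path card_low.
Qed.

End LeafPaths.

Local Open Scope ring_scope.

Section ProductMeasure.
Variables (R : realFieldType) (n : nat).
Implicit Types (p : 'I_n -> R) (x : {ffun 'I_n -> bool}).

Definition Pr p (E : pred {ffun 'I_n -> bool}) : R := \sum_x prob p x * (E x)%:R.

Lemma prob_ge0 p x : (forall i, 0 <= p i <= 1) -> 0 <= prob p x.
Proof.
move=> p01; apply: prodr_ge0 => i _; have /andP[p0 p1] := p01 i.
by case: (x i); rewrite ?subr_ge0.
Qed.

Lemma Pr_all_ones p (S : {set 'I_n}) :
  Pr p (fun x => [forall j in S, x j]) = \prod_(j in S) p j.
Proof.
pose F j (b : bool) := (if b then p j else 1 - p j) * (if j \in S then b%:R else 1).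
have indicatorE x :
    [forall j in S, x j]%:R = \prod_j (if j \in S then (x j)%:R else 1) :> R.
  have [/forall_inP allS | /forall_inPn[j jS /negbTE xj]] := boolP [forall j in S, x j].
    by rewrite big1 // => j _; case: ifP => // /allS ->.
  by rewrite (bigD1 j) //= jS xj mul0r.
transitivity (\sum_(x : {ffun 'I_n -> bool}) \prod_j F j (x j)).
  apply: eq_bigr => x _; rewrite indicatorE /prob -big_split /=.
  by apply: eq_bigr => j _; rewrite /F; case: (x j).
rewrite -bigA_distr_bigA [RHS]big_mkcond /=; apply: eq_bigr => j _.
rewrite big_bool /F /=; case: (j \in S); last by rewrite !mulr1 addrC subrK.
by rewrite mulr1 mulr0 addr0.
Qed.

End ProductMeasure.

Lemma second_moment_method (R : realFieldType) (T : finType) (w Z : T -> R)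
    (E : pred T) (G : R) :
  (forall t, 0 <= w t) -> (forall t, ~~ E t -> Z t = 0) -> 0 < G ->
  \sum_t w t * Z t ^+ 2 <= G * \sum_t w t * Z t ->
  \sum_t w t * Z t <= G * \sum_t w t * (E t)%:R.
Proof.
move=> w0 Z0 G0 M2_le.
have pointwise t : 2 * G * Z t <= Z t ^+ 2 + G ^+ 2 * (E t)%:R.
  have [_|/Z0->] := boolP (E t); last by rewrite mulr0 expr0n !add0r mulr0.
  by rewrite mulr1 -subr_ge0 (_ : _ - _ = (Z t - G) ^+ 2) ?sqr_ge0 //; ring.
have : 2 * G * \sum_t w t * Z t <= \sum_t w t * Z t ^+ 2 + G ^+ 2 * \sum_t w t * (E t)%:R.
  rewrite !mulr_sumr -big_split /=; apply: ler_sum => t _.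
  by have := pointwise t; have := w0 t; nra.
move: M2_le; set M1 := \sum_t _; set M2 := \sum_t _; set P := \sum_t _ => M2_le M1_le.
by rewrite -(ler_pM2l G0); nra.
Qed.

Lemma expr_tail (R : realFieldType) (p : R) (t N : nat) : (t <= N)%N ->
  p ^+ t = \sum_(j < N) (t <= j)%:R * (p ^+ j * (1 - p)) + p ^+ N.
Proof.
elim: N => [|N IH]; first by rewrite leqn0 => /eqP->; rewrite big_ord0 add0r.
rewrite big_ord_recr /=; case: (leqP t N) => [tN _ | Nt tN].
  by rewrite {1}(IH tN) mul1r exprS; ring.
have -> : t = N.+1 by apply/eqP; rewrite eqn_leq tN.
rewrite big1 ?ltnn ?mul0r ?add0r // => j _.
by rewrite leqNgt ltnS (ltnW (ltn_ord j)) mul0r.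
Qed.

Section TreeMoments.
Variables (R : realFieldType) (d : nat) (p : R).
Hypotheses (p_gt0 : 0 < p) (p_le1 : p <= 1).
Implicit Types (v w l : 'I_(2 ^ d)) (x : {ffun 'I_(tree_n d) -> bool}).

Local Notation pr := (prob (fun _ : 'I_(tree_n d) => p)).

Definition alive_count x : R := \sum_l (alive l x)%:R.

Definition moment_factor : R :=
  (1 - p) * \sum_(j < d.+1) (2 * p) ^+ j + p * (2 * p) ^+ d.

Let pr_ge0 x : 0 <= pr x.
Proof. by apply: prob_ge0 => _; rewrite ltW. Qed.

Lemma Pr_all_ones_const (S : {set 'I_(tree_n d)}) :
  Pr (fun _ => p) (fun x => [forall j in S, x j]) = p ^+ #|S|.
Proof. by rewrite Pr_all_ones prodr_const. Qed.

Lemma Pr_alive l : Pr (fun _ => p) (alive l) = p ^+ d.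
Proof. by rewrite /alive Pr_all_ones_const card_leaf_path. Qed.

Lemma first_moment : \sum_x pr x * alive_count x = (2 * p) ^+ d.
Proof.
under eq_bigr do rewrite mulr_sumr.
rewrite exchange_big /= (eq_bigr (fun _ => p ^+ d)).
  by rewrite sumr_const card_ord exprMn -natrX mulr_natl.
by move=> l _; exact: Pr_alive.
Qed.

Lemma sum_expr_branch_height v : \sum_(w : 'I_(2 ^ d)) p ^+ branch_height d v w <= moment_factor.
Proof.
have bd w := branch_height_le (ltn_ord v) (ltn_ord w).
under eq_bigr do rewrite (expr_tail p (leqW (bd _))).
rewrite big_split /= exchange_big /= sumr_const card_ord /moment_factor mulr_sumr.
apply: lerD; last first.
  by rewrite (_ : p ^+ d.+1 *+ 2 ^ d = p * (2 * p) ^+ d) // exprS exprMn -natrX mulr_natl mulrnAr.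
apply: ler_sum => j _; rewrite -mulr_suml.
have -> : (1 - p) * (2 * p) ^+ j = (2 ^ j)%:R * (p ^+ j * (1 - p)).
  by rewrite exprMn natrX; ring.
apply: ler_wpM2r; first by rewrite mulr_ge0 ?exprn_ge0 ?subr_ge0 // ltW.
rewrite -natr_sum ler_nat (leq_trans _ (card_branch_height_le v (ltn_ord j))) //.
rewrite -sum1_card [leqRHS]big_mkcond; apply: leq_sum => w _.
by rewrite inE; case: ifP.
Qed.

Lemma second_moment :
  \sum_x pr x * alive_count x ^+ 2 <= moment_factor * \sum_x pr x * alive_count x.
Proof.
have square x : alive_count x ^+ 2 =
    \sum_v \sum_w [forall j in leaf_path v :|: leaf_path w, x j]%:R.
  rewrite expr2 mulr_suml; apply: eq_bigr => v _; rewrite mulr_sumr.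
  apply: eq_bigr => w _; rewrite -natrM mulnb; congr (nat_of_bool _)%:R.
  apply/andP/forall_inP => [[/forall_inP Hv /forall_inP Hw] j|H].
    by rewrite inE => /orP[/Hv|/Hw].
  by split; apply/forall_inP => j jS; apply: H; rewrite inE jS ?orbT.
under eq_bigr do rewrite square mulr_sumr.
have -> : moment_factor * \sum_x pr x * alive_count x =
    \sum_(v : 'I_(2 ^ d)) p ^+ d * moment_factor.
  by rewrite first_moment sumr_const card_ord exprMn -natrX mulr_natl mulrnAr mulrC.
rewrite exchange_big.
apply: ler_sum => v _; under eq_bigr do rewrite mulr_sumr.
rewrite exchange_big /= (eq_bigr (fun w => p ^+ #|leaf_path v :|: leaf_path w|)); last first.
  by move=> w _; exact: Pr_all_ones_const.
apply: (@le_trans _ _ (\sum_(w : 'I_(2 ^ d)) p ^+ d * p ^+ branch_height d v w)).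
  apply: ler_sum => w _; rewrite -exprD.
  by have := ler_wiXn2l (ltW p_gt0) p_le1 (card_leaf_pathU v w).
rewrite -mulr_sumr; apply: ler_wpM2l; first exact: exprn_ge0 (ltW p_gt0).
exact: sum_expr_branch_height.
Qed.

Lemma moment_factor_gt0 : 0 < moment_factor.
Proof.
rewrite /moment_factor ltr_wpDl ?mulr_gt0 ?exprn_gt0 ?mulr_gt0 //.
by rewrite mulr_ge0 ?subr_ge0 // sumr_ge0 // => j _; rewrite exprn_ge0 // mulr_ge0 // ltW.
Qed.

Lemma Pr_tree_f_ge : (2 * p) ^+ d <= moment_factor * Pr (fun _ => p) (@tree_f d).
Proof.
rewrite -first_moment; apply: second_moment_method.
- exact: pr_ge0.
- move=> x; rewrite tree_fE negb_exists => /forallP dead.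
  by rewrite /alive_count big1 // => l _; rewrite (negbTE (dead l)).
- exact: moment_factor_gt0.
- exact: second_moment.
Qed.

End TreeMoments.

Lemma eps_moment_factor_le (R : realFieldType) (eps : R) d :
  0 < eps -> eps <= 1 -> eps * moment_factor d ((1 + eps) / 2) <= (1 + eps) ^+ d.
Proof.
move=> eps_gt0 eps_le1; rewrite /moment_factor.
have -> : 2 * ((1 + eps) / 2) = 1 + eps by field.
have := subrX1 (1 + eps) d.+1; rewrite (_ : 1 + eps - 1 = eps); last by ring.
set S := \sum_(i < d.+1) _; rewrite exprS; set A := (1 + eps) ^+ d => geom.
have A_ge0 : 0 <= A by rewrite exprn_ge0 // addr_ge0 // ltW.
have -> : eps * ((1 - (1 + eps) / 2) * S + (1 + eps) / 2 * A) =
   (1 - (1 + eps) / 2) * (eps * S) + eps * (1 + eps) / 2 * A by ring.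
by rewrite -geom; nra.
Qed.

Lemma Pr_tree_f_ge_eps (R : realFieldType) (eps : R) d :
  0 < eps -> eps <= 1 -> eps <= Pr (fun _ => (1 + eps) / 2) (@tree_f d).
Proof.
move=> eps_gt0 eps_le1; set p := (1 + eps) / 2.
have p_gt0 : 0 < p by rewrite /p; lra.
have p_le1 : p <= 1 by rewrite /p; lra.
have G_gt0 := moment_factor_gt0 d p_gt0 p_le1.
rewrite -(ler_pM2l G_gt0) mulrC (le_trans (eps_moment_factor_le d eps_gt0 eps_le1)) //.
by rewrite (_ : 1 + eps = 2 * p); [exact: Pr_tree_f_ge | rewrite /p; field].
Qed.

Lemma card_ord_lt n k : #|[set i : 'I_n | (i < k)%N]| = minn k n.
Proof.
have le_mn := geq_minr k n.
have widen_inj : injective (widen_ord le_mn) by move=> j j' [] /val_inj.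
rewrite -[RHS]card_ord -(card_imset _ widen_inj).
apply: eq_card => i; rewrite inE; apply/idP/imsetP => [ik | [j _ ->]].
  have ikn : (i < minn k n)%N by rewrite leq_min ik ltn_ord.
  by exists (Ordinal ikn); last apply: val_inj.
by rewrite /= (leq_trans (ltn_ord j)) // geq_minl.
Qed.

Lemma sum_ord_lt K m : (\sum_(k < K) (k < m) = minn K m)%N.
Proof. by elim: K => [|K IH]; rewrite ?big_ord0 ?min0n // big_ord_recr /= IH; case: ltnP; lia. Qed.

Section StoppingTime.
Variables (R : realFieldType) (n : nat) (f : {ffun 'I_n -> bool} -> bool).
Variable s : {perm 'I_n}.
Implicit Types (x : {ffun 'I_n -> bool}) (T : {set 'I_n}).

Lemma card_tested k : (#|tested s k| <= k)%N.
Proof. by rewrite (leq_trans (leq_imset_card _ _)) // card_ord_lt geq_minl. Qed.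

Lemma testedS k k' : (k <= k')%N -> tested s k \subset tested s k'.
Proof.
move=> kk'; apply/subsetP => j /imsetP[i]; rewrite inE => ik ->.
by apply: imset_f; rewrite inE (leq_trans ik kk').
Qed.

Lemma determinedS T T' x : T \subset T' -> determined f T x -> determined f T' x.
Proof.
move=> /subsetP TT' /forallP detT; apply/forallP => y; apply/implyP => /forall_inP yx.
by apply: (implyP (detT y)); apply/forall_inP => i /TT'; apply: yx.
Qed.

Let has_determined x : has (fun k => determined f (tested s k) x) (iota 0 n.+1).
Proof.
apply/hasP; exists n; first by rewrite mem_iota add0n ltnS leqnn.
apply/forallP => y; apply/implyP => /forall_inP yx.
suff -> : y = x by [].
apply/ffunP => i; apply/eqP/yx.
by rewrite -(permKV s i) imset_f // inE ltn_ord.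
Qed.

Lemma stop_time_le x : (stop_time f s x <= n)%N.
Proof. by have := has_determined x; rewrite has_find size_iota ltnS. Qed.

Lemma determined_tested x k : (stop_time f s x <= k)%N -> determined f (tested s k) x.
Proof.
move=> stop_k; apply: determinedS (testedS stop_k) _.
by have := nth_find 0 (has_determined x); rewrite nth_iota ?add0n ?ltnS ?stop_time_le.
Qed.

Lemma run_cost1 x : run_cost f (fun _ => 1) s x = (stop_time f s x)%:R :> R.
Proof.
rewrite /run_cost sumr_const -[in RHS](minn_idPl (stop_time_le x)) -card_ord_lt.
by congr (_%:R); apply: eq_card => i; rewrite inE.
Qed.

Lemma expected_cost1_ge (p : 'I_n -> R) K : (forall i, 0 <= p i <= 1) ->
  \sum_(k < K) Pr p (fun x => k < stop_time f s x)%N <= expected_cost f (fun _ => 1) p s.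
Proof.
move=> p01; rewrite exchange_big; apply: ler_sum => x _.
rewrite -mulr_sumr run_cost1; apply: ler_wpM2l; first exact: prob_ge0.
by rewrite -natr_sum ler_nat sum_ord_lt geq_minr.
Qed.

End StoppingTime.

Lemma le_OPT_N (R : realFieldType) n (f : {ffun 'I_n -> bool} -> bool) (c p : 'I_n -> R) a :
  (forall s, a <= expected_cost f c p s) -> a <= OPT_N f c p.
Proof.
move=> a_le; rewrite /OPT_N; elim/big_ind: _ => // u v au av.
by rewrite le_min au av.
Qed.

Section TreeStopping.
Variables (d : nat) (s : {perm 'I_(tree_n d)}).
Implicit Types (T : {set 'I_(tree_n d)}) (x : {ffun 'I_(tree_n d) -> bool}).

Lemma tree_f_certificate T x : determined (@tree_f d) T x -> tree_f x ->
  exists2 l, leaf_path l \subset T & alive l x.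
Proof.
move=> /forallP detT fx; pose y := [ffun j => (j \in T) && x j].
have /eqP fy : tree_f y == tree_f x.
  by apply: (implyP (detT y)); apply/forall_inP => j jT; rewrite ffunE jT.
move: fx; rewrite -fy tree_fE => /existsP[l /forall_inP alive_y]; exists l.
  by apply/subsetP => j /alive_y; rewrite ffunE => /andP[].
by apply/forall_inP => j /alive_y; rewrite ffunE => /andP[].
Qed.

(* Distinct leaves have distinct bottom edges. *)
Lemma card_covered_leaves T : (0 < d)%N ->
  (#|[set l | leaf_path l \subset T]| <= #|T|)%N.
Proof.
move=> d_gt0; pose bottom l := path_edge l (Ordinal d_gt0).
rewrite -(card_in_imset (f := bottom)); last first.
  move=> l l' _ _ /path_edge_inj /=; rewrite !ancestor0 => /addnI.
  exact: val_inj.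
apply/subset_leq_card/subsetP => j /imsetP[l]; rewrite inE => /subsetP lT ->.
by apply/lT/imset_f.
Qed.

Lemma Pr_tree_f_le_stop (R : realFieldType) (p : R) k : (0 < d)%N -> 0 <= p -> p <= 1 ->
  Pr (fun _ => p) (@tree_f d)
    <= Pr (fun _ => p) (fun x => k < stop_time (@tree_f d) s x)%N + k%:R * p ^+ d.
Proof.
move=> d_gt0 p0 p1; set L := [set l | leaf_path l \subset tested s k].
set stop := stop_time (@tree_f d) s.
have pointwise x : (tree_f x)%:R <= (k < stop x)%N%:R + \sum_(l in L) (alive l x)%:R :> R.
  have [_ | stop_k] := ltnP k (stop x).
    by rewrite ler_wpDr ?sumr_ge0 // ler_nat leq_b1.
  have [fx|] := boolP (tree_f x); last by rewrite add0r sumr_ge0.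
  have [l lL alive_l] := tree_f_certificate (determined_tested stop_k) fx.
  by rewrite add0r (bigD1 l) ?inE //= alive_l ler_wpDr ?sumr_ge0.
have pr_ge0 x : 0 <= prob (fun _ : 'I_(tree_n d) => p) x by apply: prob_ge0 => _; rewrite p0.
apply: le_trans (ler_sum _ (fun x _ => ler_wpM2l (pr_ge0 x) (pointwise x))) _.
under eq_bigr do rewrite mulrDr mulr_sumr.
rewrite big_split lerD2l exchange_big /= (eq_bigr (fun _ => p ^+ d)) => [|l _]; last exact: Pr_alive.
rewrite sumr_const mulr_natl; apply: ler_wpMn2l; first exact: exprn_ge0.
exact: leq_trans (card_covered_leaves _ d_gt0) (card_tested s k).
Qed.

End TreeStopping.

Lemma sum_arith_ge (R : realFieldType) (eps q : R) K :
  0 < q -> (1 <= K)%N -> K%:R * q <= eps -> eps < K%:R * q + q ->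
  eps ^+ 2 / (8 * q) <= \sum_(k < K) (eps - k%:R * q).
Proof.
move=> q_gt0 K_ge1 Kq_le eps_lt.
have -> : \sum_(k < K) (eps - k%:R * q) = K%:R * eps - K%:R * (K%:R - 1) / 2 * q.
  elim: (K) => [|k IH]; first by rewrite big_ord0; ring.
  by rewrite big_ord_recr /= IH -addn1 natrD; field.
have : 1 <= K%:R :> R by rewrite ler1n.
by rewrite ler_pdivrMr ?mulr_gt0 //; nra.
Qed.

Lemma exists_floor_ratio (R : realFieldType) (q eps : R) N :
  0 < q -> q <= eps -> eps < N%:R * q ->
  exists K, [/\ (1 <= K)%N, K%:R * q <= eps & eps < K%:R * q + q].
Proof.
move=> q_gt0 q_le eps_lt.
have N_gt0 : (0 < N)%N by case: N eps_lt => //; rewrite mul0r; lra.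
have one_ok : (1 <= N)%N && (1%:R * q <= eps) by rewrite N_gt0 mul1r.
have bounded k : (k <= N)%N && (k%:R * q <= eps) -> (k <= N)%N by case/andP.
have [K /andP[KN Kq_le] K_max] := ex_maxnP (ex_intro _ 1%N one_ok) bounded.
exists K; split; [exact: K_max | by [] |].
rewrite -[q in _ + q]mul1r -mulrDl natr1 ltNge; apply/negP => K1q_le.
have [K1N|NK] := leqP K.+1 N.
  by have := K_max K.+1; rewrite K1N K1q_le ltnn => /(_ isT).
have : N%:R * q <= K%:R * q by rewrite ler_pM2r // ler_nat -ltnS.
lra.
Qed.

Theorem mainTheorem13 (R : realFieldType) (eps : R) (d : nat) :
  0 < eps -> eps <= 1 / 2 -> (1 <= d)%N ->
  ((1 + eps) / 2) ^+ d <= eps ->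
  eps ^+ 2 / (8 * ((1 + eps) / 2) ^+ d)
    <= OPT_N (@tree_f d) (fun _ => 1) (fun _ => (1 + eps) / 2).
Proof.
move=> eps_gt0 eps_le d_gt0; set p := (1 + eps) / 2; set q := p ^+ d => q_le.
have eps_le1 : eps <= 1 by lra.
have [p_gt0 p_le1] : 0 < p /\ p <= 1 by split; rewrite /p; lra.
have q_gt0 : 0 < q by rewrite exprn_gt0.
have eps_lt : eps < (tree_n d)%:R * q.
  have : 1 <= (2 ^ d)%:R * q by rewrite natrX -exprMn exprn_ege1 // /p; lra.
  have : (2 ^ d)%:R * q <= (tree_n d)%:R * q by rewrite ler_pM2r // ler_nat expn_le_tree_n.
  lra.
have [K [K_ge1 Kq_le eps_lt_K]] := exists_floor_ratio q_gt0 q_le eps_lt.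
apply: le_OPT_N => s; apply: (le_trans (sum_arith_ge q_gt0 K_ge1 Kq_le eps_lt_K)).
have p01 (i : 'I_(tree_n d)) : 0 <= p <= 1 by rewrite ltW.
apply: le_trans (expected_cost1_ge _ s K p01).
apply: ler_sum => k _; rewrite lerBlDr.
apply: le_trans (Pr_tree_f_le_stop s k d_gt0 (ltW p_gt0) p_le1).
exact: Pr_tree_f_ge_eps eps_gt0 eps_le1.
Qed.
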